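(* Let $R$ be an integral domain with quotient field $K$. Let $B=\bigcup_{0\ne a\in R}R[[t/a]]$, the union taken inside $K((t))$, where $R[[t/a]]=\{\sum_{n\ge0}c_n(t/a)^n : c_n\in R\}$, and let $F=\operatorname{Quot}(B)\subseteq K((t))$. Then $F$ is separably closed in $K((t))$. *)

From HB Require Import structures.
From mathcomp Require Import all_boot all_order all_algebra all_field.
From Stdlib Require Import ClassicalEpsilon FunctionalExtensionality.
Set Implicit Arguments. Unset Strict Implicit. Unset Printing Implicit Defensive.
Import GRing.Theory.
Local Open Scope ring_scope.

Definition pb (P : Prop) : bool :=
  if excluded_middle_informative P then true else false.
Lemma pbP (P : Prop) : reflect P (pb P).
Proof. by rewrite /pb; case: excluded_middle_informative => h; constructor. Qed.

Record pser (K : Type) := PSer { pcoef : nat -> K }.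
Coercion pcoef : pser >-> Funclass.

Lemma pserP (K : Type) (f g : pser K) : (forall n, f n = g n) -> f = g.
Proof.
by case: f g => f [g] /= h; congr PSer; apply: functional_extensionality.
Qed.

Section Classical.
Variable K : Type.

Definition pser_eqb (f g : pser K) := pb (f = g).
Lemma pser_eqP : Equality.axiom pser_eqb.
Proof. by move=> f g; apply: pbP. Qed.
HB.instance Definition _ := hasDecEq.Build (pser K) pser_eqP.

Definition pser_find (P : pred (pser K)) (n : nat) : option (pser K) :=
  match excluded_middle_informative (exists x, P x) with
  | left H => Some (proj1_sig (constructive_indefinite_description _ H))
  | right _ => None
  end.
Lemma pser_find_correct P n x : pser_find P n = Some x -> P x.
Proof.
rewrite /pser_find; case: excluded_middle_informative => // H [<-].
exact: proj2_sig (constructive_indefinite_description _ H).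
Qed.
Lemma pser_find_complete (P : pred (pser K)) :
  (exists x, P x) -> exists n, pser_find P n.
Proof. by move=> H; exists 0%N; rewrite /pser_find; case: excluded_middle_informative. Qed.
Lemma pser_find_ext (P Q : pred (pser K)) : P =1 Q -> pser_find P =1 pser_find Q.
Proof.
move=> PQ; have -> : P = Q by apply: functional_extensionality.
by [].
Qed.
HB.instance Definition _ := hasChoice.Build (pser K)
  pser_find_correct pser_find_complete pser_find_ext.
End Classical.

Section Zmod.
Variable K : zmodType.
Definition pzero : pser K := PSer (fun _ => 0).
Definition popp (f : pser K) := PSer (fun n => - f n).
Definition padd (f g : pser K) := PSer (fun n => f n + g n).
Lemma paddA : associative padd.
Proof. by move=> f g h; apply: pserP => n /=; rewrite addrA. Qed.
Lemma paddC : commutative padd.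
Proof. by move=> f g; apply: pserP => n /=; rewrite addrC. Qed.
Lemma padd0 : left_id pzero padd.
Proof. by move=> f; apply: pserP => n /=; rewrite add0r. Qed.
Lemma paddN : left_inverse pzero popp padd.
Proof. by move=> f; apply: pserP => n /=; rewrite addNr. Qed.
HB.instance Definition _ := GRing.isZmodule.Build (pser K) paddA paddC padd0 paddN.
End Zmod.

Section Ring.
Variable K : comNzRingType.

Definition ptrunc (m : nat) (f : pser K) : {poly K} := \poly_(i < m) f i.
Lemma ptruncE m f j : (j < m)%N -> (ptrunc m f)`_j = f j.
Proof. by move=> hj; rewrite coef_poly hj. Qed.

Definition pmul (f g : pser K) : pser K :=
  PSer (fun n => (ptrunc n.+1 f * ptrunc n.+1 g)`_n).
Definition pone : pser K := PSer (fun n => (n == 0%N)%:R).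

Lemma coefM_low (p q p' q' : {poly K}) n :
  (forall j, (j <= n)%N -> p`_j = p'`_j) -> (forall j, (j <= n)%N -> q`_j = q'`_j) ->
  (p * q)`_n = (p' * q')`_n.
Proof.
move=> hp hq; rewrite !coefM; apply: eq_bigr => -[j hj] _ /=.
by rewrite hp ?hq // leq_subr.
Qed.

Lemma pmul_trunc m f g n : (n < m)%N -> (ptrunc m f * ptrunc m g)`_n = pmul f g n.
Proof.
move=> hn; rewrite /pmul /=; apply: coefM_low => j hj.
  by rewrite !ptruncE // (leq_ltn_trans hj).
by rewrite !ptruncE // (leq_ltn_trans hj).
Qed.

Lemma ptrunc_mul m f g j : (j < m)%N ->
  (ptrunc m (pmul f g))`_j = (ptrunc m f * ptrunc m g)`_j.
Proof. by move=> hj; rewrite ptruncE // pmul_trunc. Qed.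

Lemma pmulA : associative pmul.
Proof.
move=> f g h; apply: pserP => n.
rewrite -(pmul_trunc _ _ (ltnSn n)) -[RHS](pmul_trunc _ _ (ltnSn n)).
rewrite (@coefM_low _ _ (ptrunc n.+1 f) (ptrunc n.+1 g * ptrunc n.+1 h) n) //; last first.
  by move=> j hj; rewrite ptrunc_mul.
rewrite mulrA; apply: coefM_low => // j hj.
by rewrite ptrunc_mul.
Qed.

Lemma pmulC : commutative pmul.
Proof. by move=> f g; apply: pserP => n; rewrite /pmul /= mulrC. Qed.

Lemma ptrunc_one m : (0 < m)%N -> ptrunc m pone = 1.
Proof.
move=> hm; apply/polyP => j; rewrite coef_poly coef1 /=.
case: j => [|j]; first by rewrite hm.
by case: ifP.
Qed.

Lemma pmul1 : left_id pone pmul.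
Proof. by move=> f; apply: pserP => n; rewrite /pmul /= ptrunc_one // mul1r ptruncE. Qed.

Lemma ptrunc_add m f g : ptrunc m (padd f g) = ptrunc m f + ptrunc m g.
Proof. by apply/polyP => j; rewrite coefD !coef_poly; case: ifP; rewrite ?addr0. Qed.

Lemma pmulDl : left_distributive pmul (@padd K).
Proof.
by move=> f g h; apply: pserP => n; rewrite /pmul /= ptrunc_add mulrDl coefD.
Qed.

Lemma pone_neq0 : pone != (pzero K).
Proof.
apply/eqP => /(congr1 (fun f : pser K => f 0%N)) /= /eqP; by rewrite oner_eq0.
Qed.

HB.instance Definition _ :=
  GRing.Zmodule_isComNzRing.Build (pser K) pmulA pmulC pmul1 pmulDl pone_neq0.

Definition punit : {pred pser K} := fun x => pb (exists y, y * x = 1).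
Definition pinv (x : pser K) : pser K :=
  match excluded_middle_informative (exists y, y * x = 1) with
  | left H => proj1_sig (constructive_indefinite_description _ H)
  | right _ => x
  end.
Lemma pmulV : {in punit, left_inverse 1 pinv *%R}.
Proof.
move=> x /pbP Hx; rewrite /pinv; case: excluded_middle_informative => [H|/(_ Hx)[]].
exact: proj2_sig (constructive_indefinite_description _ H).
Qed.
Lemma punitPl x y : y * x = 1 -> punit x.
Proof. by move=> h; apply/pbP; exists y. Qed.
Lemma pinv_out : {in [predC punit], pinv =1 id}.
Proof.
move=> x; rewrite inE => /negP hx; rewrite /pinv.
case: excluded_middle_informative => // H; by case: hx; apply/pbP.
Qed.
HB.instance Definition _ :=
  GRing.ComNzRing_hasMulInverse.Build (pser K) pmulV punitPl pinv_out.
End Ring.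

Section Idomain.
Variable K : idomainType.

Lemma pser_neq0 (f : pser K) : f != 0 -> exists n, f n != 0.
Proof.
move=> hf; case: (pbP (exists n, f n != 0)) => // H.
case/negP: hf; apply/eqP/pserP => n /=; apply/eqP/negPn/negP => h; apply: H.
by exists n.
Qed.

Lemma pmul_eq0 : GRing.integral_domain_axiom (pser K).
Proof.
move=> f g hfg; apply/norP => -[/pser_neq0 hf /pser_neq0 hg].
case: (ex_minnP hf) => a fa amin; case: (ex_minnP hg) => b gb bmin.
have : pmul f g (a + b)%N = 0 by change (pmul f g = pzero K) in hfg; rewrite hfg.
have hab : (a < (a + b)%N.+1)%N by rewrite ltnS leq_addr.
rewrite -(pmul_trunc _ _ (ltnSn _)) coefM (bigD1 (Ordinal hab)) //= big1.
  rewrite addr0 !ptruncE ?addKn // ?ltnS ?leq_subr ?leq_addl //.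
  by move/eqP; rewrite mulf_eq0 (negbTE fa) (negbTE gb).
move=> [j hj] /= hja; change ((a+b)%N.+1) with (a+b).+1%N in hj; rewrite !ptruncE ?ltnS ?leq_subr //.
have [ja|aj] := ltnP j a.
  have -> : f j = 0 by apply/eqP/negPn/negP => /amin; rewrite leqNgt ja.
  by rewrite mul0r.
have {}aj : (a < j)%N by rewrite ltn_neqAle eq_sym aj andbT; exact: hja.
have -> : g (a + b - j)%N = 0.
  apply/eqP/negPn/negP => /bmin; rewrite leqNgt; case/negP.
  have hja' : (j <= a + b)%N by rewrite -ltnS.
  by rewrite ltn_subLR // ltn_add2r.
by rewrite mulr0.
Qed.
HB.instance Definition _ := GRing.ComUnitRing_isIntegral.Build (pser K) pmul_eq0.
End Idomain.

(* R : integral domain, K = Quot(R) = {fraction R}, elements of R embedded   *)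
(* in K by r%:F.  K[[t]] = pser K, and K((t)) = Quot(K[[t]]).                *)
Notation "x %:F" := (@FracField.tofrac _ x) : ring_scope.

Definition laurent (K : idomainType) := {fraction (pser K)}.

Definition in_Rta (R : idomainType) (a : R) (f : pser {fraction R}) : Prop :=
  exists c : nat -> R, forall n, f n = (c n)%:F / (a%:F) ^+ n.

Definition in_B (R : idomainType) (f : pser {fraction R}) : Prop :=
  exists a : R, a != 0 /\ in_Rta a f.

Definition in_F (R : idomainType) (x : laurent {fraction R}) : Prop :=
  exists b1 b2 : pser {fraction R},
    [/\ in_B b1, in_B b2, b2 != 0 & x = b1%:F / b2%:F].

Definition separable_over (L : fieldType) (S : L -> Prop) (x : L) : Prop :=
  exists p : {poly L}, [/\ forall i, S p`_i, separable_poly p & root p x].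

Definition separably_closed_in (L : fieldType) (S : L -> Prop) : Prop :=
  forall x : L, separable_over S x -> S x.

(* Call f in K[[t]] bounded when d * a^n * f_n lies in R for every n, for
   some nonzero d, a in R.  Bounded series form a subring of K[[t]], and f is
   bounded iff some constant multiple d * f lies in B, so F is also the
   fraction field of the bounded series.  The heart of the proof is an
   integral form of Hensel's lemma [hensel_bounded]: a simple root in K[[t]]
   of a polynomial with bounded coefficients is bounded.  After translating
   and rescaling, the root z satisfies a fixed point equation
   z = sum_j V_j z^j with V_j(0) = 0 for j > 0, which determines the
   coefficients of z recursively; induction on the coefficient index then
   shows that b^n z_n lies in R for a suitable b.  For the theorem, a
   separable element x of K((t)) over F is written x = t^-k y with y in
   K[[t]]; then y is a simple root of a polynomial over F, hence, after
   clearing denominators, of one with bounded coefficients, so y and x lie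
   in F. *)

From HB Require Import structures.
From mathcomp Require Import all_boot all_order all_algebra all_field.
From Stdlib Require Import ClassicalEpsilon.
From mathcomp Require Import ring zify.
Set Implicit Arguments. Unset Strict Implicit. Unset Printing Implicit Defensive.
Import GRing.Theory.
Local Open Scope ring_scope.

Section SeriesRing.
Variable K : comNzRingType.
Implicit Types (f g : pser K) (c : K).

Lemma pcoefM f g n : (f * g) n = \sum_(i < n.+1) f i * g (n - i)%N.
Proof.
rewrite /GRing.mul /= /pmul /= coefM; apply: eq_bigr => -[i hi] _ /=.
by rewrite !ptruncE // ltnS ?leq_subr // -ltnS.
Qed.
Lemma pcoefD f g n : (f + g) n = f n + g n. Proof. by []. Qed.
Lemma pcoefN f n : (- f) n = - f n. Proof. by []. Qed.
Lemma pcoefB f g n : (f - g) n = f n - g n. Proof. by []. Qed.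
Lemma pcoef0 n : (0 : pser K) n = 0. Proof. by []. Qed.
Lemma pcoef1 n : (1 : pser K) n = (n == 0%N)%:R. Proof. by []. Qed.
Lemma pcoef_sum I (r : seq I) (P : pred I) (F : I -> pser K) n :
  (\sum_(i <- r | P i) F i) n = \sum_(i <- r | P i) F i n.
Proof. by elim/big_rec2: _ => // i y1 y2 _ <-. Qed.

Definition pconst c : pser K := PSer (fun n => if n == 0%N then c else 0).
Lemma pcoefC c n : pconst c n = if n == 0%N then c else 0. Proof. by []. Qed.
Lemma pcoefCM c f n : (pconst c * f) n = c * f n.
Proof.
rewrite pcoefM big_ord_recl /= subn0 big1 ?addr0 // => i _.
by rewrite /= mul0r.
Qed.
Lemma pconst1 : pconst 1 = 1.
Proof. by apply: pserP => n; rewrite pcoefC pcoef1; case: (n == 0%N). Qed.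
Lemma pconstM c c' : pconst (c * c') = pconst c * pconst c'.
Proof.
by apply: pserP => n; rewrite pcoefCM !pcoefC; case: (n == 0%N); rewrite ?mulr0.
Qed.
Lemma pconstX c k : pconst (c ^+ k) = pconst c ^+ k.
Proof. by elim: k => [|k IH]; rewrite ?pconst1 // !exprS pconstM IH. Qed.

Definition pX : pser K := PSer (fun n => (n == 1%N)%:R).
Lemma pcoefXnM k f n : (pX ^+ k * f) n = if (n < k)%N then 0 else f (n - k)%N.
Proof.
have pcoefXM g m : (pX * g) m = if m is m'.+1 then g m' else 0.
  case: m => [|m]; first by rewrite pcoefM big_ord1 /= mul0r.
  rewrite pcoefM big_ord_recl /= mul0r add0r big_ord_recl /= mul1r subSS subn0.
  by rewrite big1 ?addr0 // => i _ /=; rewrite mul0r.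
elim: k f n => [|k IH] f n; first by rewrite expr0 mul1r subn0.
rewrite exprSr -mulrA IH; case: ltnP => hn; first by rewrite ltnW.
rewrite pcoefXM; have [->|hnk] := eqVneq n k; first by rewrite subnn ltnSn.
have hk : (k < n)%N by rewrite ltn_neqAle eq_sym hnk hn.
by rewrite ltnNge hk /= -(subnSK hk).
Qed.
Lemma pXn_neq0 k : pX ^+ k != 0.
Proof.
apply/eqP => /(congr1 (fun f : pser K => (f * 1) k)).
by rewrite pcoefXnM ltnn subnn mul0r pcoef1 pcoef0 eqxx => /eqP; rewrite oner_eq0.
Qed.

Definition phead k f : pser K := PSer (fun n => if (n < k)%N then f n else 0).
Definition ptail k f : pser K := PSer (fun n => f (n + k)%N).
Lemma pcoef_head k f n : phead k f n = if (n < k)%N then f n else 0. Proof. by []. Qed.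
Lemma pcoef_tail k f n : ptail k f n = f (n + k)%N. Proof. by []. Qed.
Lemma pser_split k f : f = phead k f + pX ^+ k * ptail k f.
Proof.
apply: pserP => n; rewrite pcoefD pcoefXnM pcoef_head; case: ltnP => hn.
  by rewrite addr0.
by rewrite add0r pcoef_tail subnK.
Qed.
Lemma pheadS k f : phead k.+1 f = phead k f + pconst (f k) * pX ^+ k.
Proof.
apply: pserP => n; rewrite pcoefD mulrC pcoefXnM pcoefC !pcoef_head.
case: (ltngtP n k) => [h|h|->].
- by rewrite ltnS (ltnW h) addr0.
- by rewrite ltnS leqNgt h /= subn_eq0 leqNgt h add0r.
- by rewrite ltnSn subnn eqxx add0r.
Qed.

Definition vanishes_below k f := forall n, (n < k)%N -> f n = 0.
Lemma vanishes_belowM k f g : vanishes_below k f -> vanishes_below k (f * g).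
Proof.
move=> hf n hn; rewrite pcoefM big1 // => -[i hi] _ /=.
by rewrite hf ?mul0r // (leq_ltn_trans _ hn) // -ltnS.
Qed.
Lemma vanishes_belowN k f : vanishes_below k f -> vanishes_below k (- f).
Proof. by move=> hf n hn; rewrite pcoefN hf ?oppr0. Qed.
Lemma vanishes_below_sum k I (r : seq I) (P : pred I) (F : I -> pser K) :
  (forall i, P i -> vanishes_below k (F i)) ->
  vanishes_below k (\sum_(i <- r | P i) F i).
Proof.
move=> h n hn; rewrite pcoef_sum big1 // => i Pi; exact: h.
Qed.
Lemma vanishes_below_Xn k l g : (k <= l)%N -> vanishes_below k (pX ^+ l * g).
Proof. by move=> hkl n hn; rewrite pcoefXnM (leq_trans hn hkl). Qed.
Lemma vanishes_belowE k f : vanishes_below k f -> f = pX ^+ k * ptail k f.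
Proof.
move=> hf; rewrite {1}(pser_split k f).
suff -> : phead k f = 0 by rewrite add0r.
by apply: pserP => n; rewrite pcoef_head; case: ifP => // /hf.
Qed.

Lemma horner_vanishes_below k (p : {poly pser K}) (y y' : pser K) :
  vanishes_below k (y - y') -> vanishes_below k (p.[y] - p.[y']).
Proof.
have : root (p - p.[y']%:P) y' by rewrite /root hornerD hornerN hornerC subrr.
case/factor_theorem => q hq hyy'.
have -> : p.[y] - p.[y'] = (y - y') * q.[y].
  have := congr1 (fun r => r.[y]) hq.
  by rewrite /= hornerD hornerN hornerC hornerM hornerXsubC => ->; rewrite mulrC.
exact: vanishes_belowM.
Qed.
End SeriesRing.

Section SeriesInverse.
Variables (K : fieldType) (w : pser K).

Fixpoint inv_coefs (n : nat) : seq K :=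
  if n is n'.+1 then
    let s := inv_coefs n' in
    rcons s ((w 0%N)^-1 * ((n' == 0%N)%:R -
       \sum_(i < n') w i.+1 * nth 0 s (n' - i.+1)%N))
  else [::].
Lemma size_inv_coefs n : size (inv_coefs n) = n.
Proof. by elim: n => //= n IH; rewrite size_rcons IH. Qed.
Lemma nth_inv_coefs k n m : (k < n)%N -> (n <= m)%N ->
  nth 0 (inv_coefs m) k = nth 0 (inv_coefs n) k.
Proof.
move=> hk; elim: m => [|m IH]; first by rewrite leqn0 => /eqP ->.
rewrite leq_eqVlt => /orP [/eqP -> //|]; rewrite ltnS => hnm.
by rewrite /= nth_rcons size_inv_coefs (leq_trans hk hnm) IH.
Qed.
Definition pser_inv : pser K := PSer (fun n => nth 0 (inv_coefs n.+1) n).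

Lemma pser_invK : w 0%N != 0 -> pser_inv * w = 1.
Proof.
move=> w0; apply: pserP => n; rewrite mulrC pcoefM big_ord_recl /= subn0.
rewrite /pser_inv /= nth_rcons size_inv_coefs ltnn eqxx mulrA mulfV // mul1r.
set S1 := \sum_(i < n) _; set S2 := \sum_(i < n) _.
suff -> : S2 = S1 by rewrite subrK.
apply: eq_bigr => -[i hi] _ /=; congr (_ * _); symmetry.
rewrite -[rcons _ _]/(inv_coefs (n - i.+1).+1).
by apply: nth_inv_coefs => //; rewrite (leq_trans _ (leq_subr i n)) // subnSK.
Qed.
End SeriesInverse.

Lemma coef1_shift (T : comNzRingType) (p : {poly T}) (c : T) :
  (p \Po ('X + c%:P))`_1 = p^`().[c].
Proof.
have -> : (p \Po ('X + c%:P))`_1 = ((p \Po ('X + c%:P))^`())`_0.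
  by rewrite coef_deriv.
rewrite -horner_coef0 deriv_comp derivD derivX derivC addr0 mulr1.
by rewrite horner_comp hornerD hornerX hornerC add0r.
Qed.

Lemma frac_rep (T : idomainType) (x : {fraction T}) :
  exists n d : T, d != 0 /\ x = n%:F / d%:F.
Proof.
elim/quotW: x => r.
have dr : (r : T * T).2 != 0 by case: r.
exists (r : T * T).1, (r : T * T).2; split => //.
apply: (canRL (mulfK _)); first by rewrite tofrac_eq0.
rewrite !piE; apply/eqmodP => /=; rewrite FracField.equivfE /FracField.mulf /=.
rewrite !numden_Ratio ?oner_eq0 ?mulf_neq0 //.
  by rewrite !mulr1 mulrC.
all: by rewrite oner_eq0.
Qed.

Section Bounded.
Variable R : idomainType.
Local Notation K := {fraction R}.
Implicit Types (f g : pser K) (x : K).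

Definition Rimage : {pred K} := fun x => pb (exists r : R, x = r%:F).
Lemma RimageP x : reflect (exists r : R, x = r%:F) (x \in Rimage).
Proof. exact: pbP. Qed.
Lemma Rimage_tofrac r : r%:F \in Rimage.
Proof. by apply/RimageP; exists r. Qed.
Lemma Rimage_subring : subring_closed Rimage.
Proof.
split; first by rewrite -tofrac1 Rimage_tofrac.
  by move=> _ _ /RimageP[a ->] /RimageP[b ->]; rewrite -tofracB Rimage_tofrac.
by move=> _ _ /RimageP[a ->] /RimageP[b ->]; rewrite -tofracM Rimage_tofrac.
Qed.
HB.instance Definition _ := GRing.isSubringClosed.Build K Rimage Rimage_subring.

(* A series is bounded when some nonzero d, a work;
   up to the constant d these are exactly the elements of B. *)
Definition bounded_by (d a : R) f := forall n, d%:F * a%:F ^+ n * f n \in Rimage.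
Definition bounded : {pred pser K} :=
  fun f => pb (exists d a : R, [/\ d != 0, a != 0 & bounded_by d a f]).
Lemma boundedP f :
  reflect (exists d a : R, [/\ d != 0, a != 0 & bounded_by d a f]) (f \in bounded).
Proof. exact: pbP. Qed.

Lemma bounded_by_widen d a d' a' f :
  bounded_by d a f -> bounded_by (d * d') (a * a') f.
Proof.
move=> h n; have -> : (d * d')%:F * (a * a')%:F ^+ n * f n =
    d'%:F * a'%:F ^+ n * (d%:F * a%:F ^+ n * f n).
  by rewrite !tofracM exprMn; ring.
by apply: rpredM (h n); rewrite rpredM ?rpredX ?Rimage_tofrac.
Qed.

Lemma bounded_common (J : nat) (T : nat -> pser K) :
  (forall j, (j < J)%N -> T j \in bounded) ->
  exists d a : R, [/\ d != 0, a != 0 & forall j, (j < J)%N -> bounded_by d a (T j)].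
Proof.
elim: J => [|J IH] h; first by exists 1, 1; split; rewrite ?oner_eq0.
have [d [a [d0 a0 hT]]] := IH (fun j hj => h j (ltnW hj)).
have /boundedP[d' [a' [d0' a0' hJ]]] := h J (ltnSn J).
exists (d * d'), (a * a'); split; rewrite ?mulf_neq0 // => j; rewrite ltnS leq_eqVlt.
case/orP => [/eqP ->|hj]; last exact: bounded_by_widen (hT j hj).
by rewrite [d * d']mulrC [a * a']mulrC; apply: bounded_by_widen.
Qed.

(* Constants are bounded: for x = u / v take d = v and a = 1. *)
Lemma bounded_const x : pconst x \in bounded.
Proof.
have [u [v [v0 ->]]] := frac_rep x.
apply/boundedP; exists v, 1; split; rewrite ?oner_eq0 // => n.
rewrite pcoefC tofrac1 expr1n mulr1; case: (n == 0%N); last by rewrite mulr0 rpred0.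
by rewrite mulrC divfK ?tofrac_eq0 ?Rimage_tofrac.
Qed.

Lemma boundedB : {in bounded &, forall f g, f - g \in bounded}.
Proof.
move=> f g /boundedP[d1 [a1 [d10 a10 h1]]] /boundedP[d2 [a2 [d20 a20 h2]]].
apply/boundedP; exists (d1 * d2), (a1 * a2); split; rewrite ?mulf_neq0 // => n.
rewrite pcoefB mulrBr rpredB //; first exact: bounded_by_widen.
by rewrite [d1 * d2]mulrC [a1 * a2]mulrC; apply: bounded_by_widen.
Qed.

Lemma boundedM : {in bounded &, forall f g, f * g \in bounded}.
Proof.
move=> f g /boundedP[d1 [a1 [d10 a10 h1]]] /boundedP[d2 [a2 [d20 a20 h2]]].
apply/boundedP; exists (d1 * d2), (a1 * a2); split; rewrite ?mulf_neq0 // => n.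
rewrite pcoefM mulr_sumr; apply: rpred_sum => -[i hi] _ /=.
have -> : (d1 * d2)%:F * (a1 * a2)%:F ^+ n * (f i * g (n - i)%N) =
  (d1%:F * a1%:F ^+ i * f i) * (d2%:F * a2%:F ^+ (n - i)%N * g (n - i)%N)
   * (a1%:F ^+ (n - i)%N * a2%:F ^+ i).
  have -> : n = (i + (n - i))%N by rewrite subnKC // -ltnS.
  by rewrite addKn !tofracM exprMn !exprD; ring.
apply: rpredM; last by rewrite rpredM ?rpredX ?Rimage_tofrac.
by apply: rpredM; [exact: h1 | exact: h2].
Qed.

Lemma bounded_subring : subring_closed bounded.
Proof. by split; [rewrite -pconst1 bounded_const | exact: boundedB | exact: boundedM]. Qed.
HB.instance Definition _ := GRing.isSubringClosed.Build (pser K) bounded bounded_subring.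

Lemma bounded_pX : pX K \in bounded.
Proof.
apply/boundedP; exists 1, 1; split; rewrite ?oner_eq0 // => n.
by rewrite tofrac1 expr1n !mul1r /=; case: (n == 1%N); rewrite ?rpred1 ?rpred0.
Qed.

Lemma bounded_tail k f : f \in bounded -> ptail k f \in bounded.
Proof.
move=> /boundedP[d [a [d0 a0 h]]]; apply/boundedP.
exists (d * a ^+ k), a; split; rewrite ?mulf_neq0 ?expf_neq0 // => n.
have -> : (d * a ^+ k)%:F * a%:F ^+ n * ptail k f n = d%:F * a%:F ^+ (n + k) * f (n + k)%N.
  by rewrite pcoef_tail tofracM tofracXn exprD; ring.
exact: h.
Qed.

(* The head of any series is a polynomial in t, hence bounded. *)
Lemma bounded_head k f : phead k f \in bounded.
Proof.
elim: k => [|k IH].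
  suff -> : phead 0 f = 0 by rewrite rpred0.
  by apply: pserP => n; rewrite pcoef_head.
by rewrite pheadS rpredD ?rpredM ?rpredX ?bounded_const ?bounded_pX.
Qed.

Lemma in_B_bounded f : in_B f -> f \in bounded.
Proof.
move=> [a [a0 [c hc]]]; apply/boundedP; exists 1, a; split; rewrite ?oner_eq0 // => n.
by rewrite hc tofrac1 mul1r mulrC divfK ?expf_neq0 ?tofrac_eq0 ?Rimage_tofrac.
Qed.

Lemma bounded_by_in_B d a f : a != 0 -> bounded_by d a f -> in_B (pconst d%:F * f).
Proof.
move=> a0 h; exists a; split => //.
pose c n := sval (constructive_indefinite_description _ (RimageP _ (h n))).
exists c => n; rewrite pcoefCM.
have -> : d%:F * f n = d%:F * a%:F ^+ n * f n / a%:F ^+ n.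
  by rewrite mulrAC mulfK // expf_neq0 ?tofrac_eq0.
by rewrite (svalP (constructive_indefinite_description _ (RimageP _ (h n)))).
Qed.
End Bounded.
Arguments Rimage {R}.
Arguments bounded {R}.

Section BoundedRoots.
Variable R : idomainType.
Local Notation K := {fraction R}.
Implicit Types (w z : pser K) (b : R).

Lemma powers_integral b w n :
  (forall k, (k < n)%N -> b%:F ^+ k * w k \in Rimage) ->
  forall j l, (l < n)%N -> b%:F ^+ l * (w ^+ j) l \in Rimage.
Proof.
move=> h; elim=> [|j IH] l hl.
  rewrite expr0 pcoef1; case: (l == 0%N); last by rewrite mulr0 rpred0.
  by rewrite mulr1 rpredX ?Rimage_tofrac.
rewrite exprSr pcoefM mulr_sumr; apply: rpred_sum => -[i hi] _ /=.
have hil : (i <= l)%N by rewrite -ltnS.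
have -> : b%:F ^+ l * ((w ^+ j) i * w (l - i)%N) =
   (b%:F ^+ i * (w ^+ j) i) * (b%:F ^+ (l - i)%N * w (l - i)%N).
  by rewrite -{1}(subnKC hil) exprD; ring.
apply: rpredM; first by apply: IH; apply: leq_ltn_trans hl.
by apply: h; apply: leq_ltn_trans (leq_subr _ _) hl.
Qed.

(* Integrality of the solution of a fixed point equation
   w = sum_j W_j w^j  whose coefficients W_j (j > 0) have no constant term:
   the n-th coefficient of w only involves earlier ones, so if b^i W_j(i) lies
   in R for all i, j then so does b^n w_n. *)
Lemma fixed_point_integral (J : nat) (W : nat -> pser K) w b :
  w = \sum_(j < J) W j * w ^+ j ->
  (forall j, (0 < j < J)%N -> W j 0%N = 0) ->
  (forall j i, (j < J)%N -> b%:F ^+ i * W j i \in Rimage) ->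
  forall n, b%:F ^+ n * w n \in Rimage.
Proof.
move=> hw W0 hWb; elim/ltn_ind => n IH.
have {IH}hpow := powers_integral IH.
have -> : w n = (\sum_(j < J) W j * w ^+ j) n by rewrite -hw.
rewrite pcoef_sum mulr_sumr; apply: rpred_sum => -[j hj] _.
rewrite pcoefM mulr_sumr; apply: rpred_sum => -[i hi] _ /=.
case: i hi => [|i] hi.
  case: j hj => [|j] hj; last by rewrite W0 // mul0r mulr0 rpred0.
  rewrite expr0 pcoef1 subn0; case: (n =P 0%N) => [->|_]; last by rewrite !mulr0 rpred0.
  by rewrite mulr1; apply: hWb.
have hin : (i < n)%N by rewrite -ltnS.
have -> : b%:F ^+ n * (W j i.+1 * (w ^+ j) (n - i.+1)%N) =
  (b%:F ^+ i.+1 * W j i.+1) * (b%:F ^+ (n - i.+1)%N * (w ^+ j) (n - i.+1)%N).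
  by rewrite -{1}(subnKC hin) exprD; ring.
by apply: rpredM; [apply: hWb | apply: hpow; rewrite subnSK // leq_subr].
Qed.

(* With a common bound d, a for the V_j,
   the rescaled w' = d w solves a fixed point equation whose coefficients
   satisfy the hypothesis of [fixed_point_integral] for b = a d^J. *)
Lemma fixed_point_bounded (J : nat) (V : nat -> pser K) z :
  z = \sum_(j < J) V j * z ^+ j ->
  (forall j, (0 < j < J)%N -> V j 0%N = 0) ->
  (forall j, (j < J)%N -> V j \in bounded) -> z \in bounded.
Proof.
move=> hz V0 hV.
have [d [a [d0 a0 hVb]]] := bounded_common hV.
have dF : d%:F != 0 by rewrite tofrac_eq0.
pose W j := pconst (d%:F * d%:F^-1 ^+ j) * V j.
have hW : pconst d%:F * z = \sum_(j < J) W j * (pconst d%:F * z) ^+ j.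
  rewrite {1}hz mulr_sumr; apply: eq_bigr => j _.
  rewrite /W exprMn -pconstX mulrACA -pconstM exprVn -mulrA mulVf ?expf_neq0 //.
  by rewrite mulr1 mulrA.
have W0 j : (0 < j < J)%N -> W j 0%N = 0 by move=> hj; rewrite pcoefCM V0 // mulr0.
have hWb j i : (j < J)%N -> (a * d ^+ J)%:F ^+ i * W j i \in Rimage.
  move=> hj; rewrite pcoefCM.
  have [-> | i0] := posnP i.
    case: (posnP j) hj => [-> | j0] hj; last by rewrite V0 ?j0 // !mulr0 rpred0.
    by move: (hVb 0%N hj 0%N); rewrite !expr0 !mulr1 mul1r.
  have [k hk] : exists k, (J * i = j + k)%N.
    exists (J * i - j)%N; rewrite subnKC // (leq_trans (ltnW hj)) // leq_pmulr //.
  have -> : (a * d ^+ J)%:F ^+ i * (d%:F * d%:F^-1 ^+ j * V j i) =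
      (d%:F * a%:F ^+ i * V j i) * (d%:F ^+ j / d%:F ^+ j) * d%:F ^+ k.
    by rewrite tofracM tofracXn exprMn -exprM hk exprD exprVn; ring.
  rewrite divff ?expf_neq0 // mulr1; apply: rpredM; first exact: hVb.
  by rewrite rpredX ?Rimage_tofrac.
have hdz := fixed_point_integral hW W0 hWb.
have -> : z = pconst d%:F^-1 * (pconst d%:F * z) by rewrite mulrA -pconstM mulVf ?pconst1 ?mul1r.
rewrite rpredM ?bounded_const //; apply/boundedP.
exists 1, (a * d ^+ J); split; rewrite ?oner_eq0 ?mulf_neq0 ?expf_neq0 // => n.
by rewrite tofrac1 mul1r; apply: hdz.
Qed.

(* A root z of sum_j T_j X^j with bounded T_j is bounded when the equation is
   "nondegenerate at t = 0": T_1(0) != 0 while T_j(0) = 0 for j > 1.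
   Dividing by T_1(0) puts it in the fixed point form
   z = sum_j ([j == 1] - T_1(0)^-1 T_j) z^j. *)
Lemma bounded_root_core (J : nat) (T : nat -> pser K) z :
  (1 < J)%N -> \sum_(j < J) T j * z ^+ j = 0 -> T 1%N 0%N != 0 ->
  (forall j, (1 < j < J)%N -> T j 0%N = 0) ->
  (forall j, (j < J)%N -> T j \in bounded) -> z \in bounded.
Proof.
move=> J1 hsum T10 T0 hT; pose c := (T 1%N 0%N)^-1.
pose V j := (j == 1%N)%:R - pconst c * T j.
apply: (@fixed_point_bounded J V).
- rewrite /V; under eq_bigr do rewrite mulrBl -mulrA.
  rewrite sumrB -mulr_sumr hsum mulr0 subr0 (bigD1 (Ordinal J1)) //= expr1 mul1r.
  rewrite big1 ?addr0 // => j hj.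
  suff /negbTE -> : (j : nat) != 1%N by rewrite mul0r.
  by apply: contraNneq hj => h; apply/eqP/val_inj.
- move=> [//|[|j]] hj; rewrite /V pcoefB pcoefCM.
    by rewrite pcoef1 mulVf // subrr.
  by rewrite T0 // mulr0 subr0.
- by move=> j hj; rewrite rpredB ?rpredM ?bounded_const ?hT ?rpred_nat.
Qed.
End BoundedRoots.

Section Hensel.
Variable R : idomainType.
Local Notation K := {fraction R}.

(* Normalized Hensel situation: Q has bounded coefficients, Q(t^(m+1) z) = 0,
   and the linear coefficient Q_1 has order exactly m.  Then every term
   Q_j t^((m+1) j) has order >= k = 2m + 1, with equality for j = 1, so
   dividing Q(t^(m+1) X) by t^k gives an equation for z as in
   [bounded_root_core]. *)
Lemma bounded_shifted_root (Q : {poly pser K}) (z : pser K) m :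
  Q \is a polyOver bounded -> Q.[pX K ^+ m.+1 * z] = 0 ->
  vanishes_below m Q`_1 -> Q`_1 m != 0 -> z \in bounded.
Proof.
move=> hQ hroot Q1low Q1m.
set N := m.+1; set k := (N + m)%N; set h := pX K ^+ N; set J := size Q.
have J1 : (1 < J)%N.
  by rewrite ltnNge; apply: contra Q1m => hJ; rewrite nth_default.
have hsum : \sum_(j < J) (Q`_j * h ^+ j) * z ^+ j = 0.
  by rewrite -[RHS]hroot horner_coef -/J; apply: eq_bigr => j _; rewrite exprMn mulrA.
have low_pos j : (0 < j)%N -> vanishes_below k (Q`_j * h ^+ j).
  case: j => [|[|j]] // _.
    rewrite expr1 mulrC => n hn; rewrite pcoefXnM; case: ltnP => // hNn.
    by apply: Q1low; rewrite ltn_subLR.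
  by rewrite mulrC -exprM; apply: vanishes_below_Xn; rewrite /k /N; nia.
have low j : vanishes_below k (Q`_j * h ^+ j).
  case: (posnP j) => [-> | ]; last exact: low_pos.
  move/eqP: hsum; rewrite -(prednK (ltnW J1)) big_ord_recl expr0 mulr1 addr_eq0 => /eqP ->.
  apply/vanishes_belowN/vanishes_below_sum => j' _; apply: vanishes_belowM; exact: low_pos.
pose T j := ptail k (Q`_j * h ^+ j).
apply: (@bounded_root_core _ J T z J1).
- have : pX K ^+ k * \sum_(j < J) T j * z ^+ j = 0.
    rewrite -[RHS]hsum mulr_sumr; apply: eq_bigr => j _.
    by rewrite mulrA -(vanishes_belowE (low j)).
  by move/eqP; rewrite mulf_eq0 (negbTE (pXn_neq0 _ _)) => /eqP.
- by rewrite /T pcoef_tail add0n expr1 mulrC pcoefXnM ltnNge leq_addr /= addKn.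
- move=> j /andP[j1 _]; rewrite /T pcoef_tail add0n mulrC -exprM.
  by apply: (@vanishes_below_Xn _ k.+1); rewrite // /k /N; nia.
- move=> j _; apply: bounded_tail.
  by rewrite rpredM ?rpredX ?bounded_pX ?(polyOverP hQ).
Qed.

(* If P'(y) has order m,
   split y = y_N + t^N z with N = m + 1 and y_N a polynomial; then
   Q(X) = P(X + y_N) is in the normalized situation above, because
   Q_1 = P'(y_N) agrees with P'(y) below t^N. *)
Lemma hensel_bounded (P : {poly pser K}) (y : pser K) :
  P \is a polyOver bounded -> P.[y] = 0 -> P^`().[y] != 0 -> y \in bounded.
Proof.
move=> hP Py dPy.
have [m dPym mmin] := ex_minnP (pser_neq0 dPy).
set N := m.+1; set yN := phead N y; set z := ptail N y.
have ey : y = yN + pX K ^+ N * z := pser_split N y.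
have agree n : (n < N)%N -> P^`().[yN] n = P^`().[y] n.
  move=> hn; apply/eqP; rewrite eq_sym -subr_eq0; apply/eqP.
  rewrite -pcoefB; apply: (horner_vanishes_below _ _ hn).
  by rewrite {1}ey addrC addKr; apply: vanishes_below_Xn.
have hz : z \in bounded.
  apply: (@bounded_shifted_root (P \Po ('X + yN%:P)) z m).
  - by apply: polyOver_comp => //; rewrite polyOverXaddC bounded_head.
  - by rewrite horner_comp hornerD hornerX hornerC addrC -ey.
  - move=> n hn; rewrite coef1_shift agree ?(ltn_trans hn) //.
    by apply/eqP/negPn/negP => /mmin; rewrite leqNgt hn.
  - by rewrite coef1_shift agree.
by rewrite ey rpredD ?rpredM ?rpredX ?bounded_head ?bounded_pX.
Qed.
End Hensel.

Lemma separable_root_deriv (T : idomainType) (p : {poly T}) (x : T) :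
  separable_poly p -> root p x -> p^`().[x] != 0.
Proof. by rewrite unlock => sep_p; apply: coprimep_root sep_p. Qed.

Section QuotientField.
Variable R : idomainType.
Local Notation K := {fraction R}.
Local Notation L := (laurent K).
Implicit Types (u v y : pser K) (x : L).

Definition Fsub : {pred L} := fun x =>
  pb (exists u v, [/\ u \in bounded, v \in bounded, v != 0 & x = u%:F / v%:F]).
Lemma FsubP x : reflect
  (exists u v, [/\ u \in bounded, v \in bounded, v != 0 & x = u%:F / v%:F])
  (x \in Fsub).
Proof. exact: pbP. Qed.

Lemma Fsub_tofrac u : u \in bounded -> u%:F \in Fsub.
Proof. by move=> hu; apply/FsubP; exists u, 1; rewrite rpred1 oner_eq0 tofrac1 divr1. Qed.

Lemma Fsub_divring : divring_closed Fsub.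
Proof.
split; first by rewrite -tofrac1 Fsub_tofrac ?rpred1.
  move=> _ _ /FsubP[u1 [v1 [hu1 hv1 nv1 ->]]] /FsubP[u2 [v2 [hu2 hv2 nv2 ->]]].
  apply/FsubP; exists (u1 * v2 - u2 * v1), (v1 * v2).
  rewrite rpredB ?rpredM // mulf_neq0 //; split => //.
  have v1F : v1%:F != 0 :> L by rewrite tofrac_eq0.
  have v2F : v2%:F != 0 :> L by rewrite tofrac_eq0.
  rewrite tofracB !tofracM mulrBl invfM; congr (_ - _).
    by rewrite mulrACA (mulfV v2F) mulr1.
  by rewrite [v1%:F^-1 * _]mulrC mulrACA (mulfV v1F) mulr1.
move=> _ _ /FsubP[u1 [v1 [hu1 hv1 nv1 ->]]] /FsubP[u2 [v2 [hu2 hv2 nv2 ->]]].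
have [->|nu2] := eqVneq u2 0.
  by rewrite tofrac0 mul0r invr0 mulr0 -(tofrac0 (pser K)) Fsub_tofrac ?rpred0.
apply/FsubP; exists (u1 * v2), (v1 * u2); rewrite !rpredM ?mulf_neq0 //; split => //.
by rewrite !tofracM invf_div invfM mulrACA.
Qed.
HB.instance Definition _ := GRing.isDivringClosed.Build L Fsub Fsub_divring.

(* Fsub is the field F = Quot(B) of the statement: bounded series and
   elements of B agree up to nonzero constant factors. *)
Lemma in_F_Fsub x : in_F x <-> x \in Fsub.
Proof.
split=> [[u [v [hu hv nv ->]]]|/FsubP[u [v [hu hv nv ->]]]].
  by apply/FsubP; exists u, v; rewrite !in_B_bounded.
move: hu hv => /boundedP[d1 [a1 [d10 a10 hu]]] /boundedP[d2 [a2 [d20 a20 hv]]].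
have hu' : bounded_by (d1 * d2) a1 u by rewrite -[a1]mulr1; apply: bounded_by_widen.
have hv' : bounded_by (d1 * d2) a2 v.
  by rewrite mulrC -[a2]mulr1; apply: bounded_by_widen.
set c := pconst (d1 * d2)%:F.
have c0 : c != 0.
  apply/eqP => /(congr1 (fun f : pser K => f 0%N)) /eqP.
  by rewrite pcoefC pcoef0 /= tofrac_eq0 mulf_eq0 (negbTE d10) (negbTE d20).
exists (c * u), (c * v); split; rewrite ?mulf_neq0 //.
- exact: bounded_by_in_B hu'.
- exact: bounded_by_in_B hv'.
- by rewrite !tofracM invfM mulrACA mulfV ?tofrac_eq0 // mul1r.
Qed.

Lemma clear_denominators (q : {poly L}) : q \is a polyOver Fsub ->
  exists (D : pser K) (P : {poly pser K}),
    [/\ D \in bounded, D != 0, P \is a polyOver bounded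
      & map_poly (@tofrac _) P = D%:F *: q].
Proof.
elim/poly_ind: q => [|p c IH] hq.
  by exists 1, 0; rewrite rpred1 oner_neq0 polyOver0 map_poly0 scaler0.
have hp : p \is a polyOver Fsub.
  apply/polyOverP => i; have := polyOverP hq i.+1.
  by rewrite coefD coefMX coefC /= addr0.
have /FsubP[u [v [hu hv nv ev]]] : c \in Fsub.
  by have := polyOverP hq 0%N; rewrite coefD coefMX coefC /= add0r.
have [D [P [hD nD hP hPD]]] := IH hp.
have vF : v%:F != 0 :> L by rewrite tofrac_eq0.
exists (D * v), (v *: P * 'X + (u * D)%:P); split.
- exact: rpredM.
- by rewrite mulf_neq0.
- by rewrite rpredD ?rpredM ?polyOverZ ?polyOverX ?polyOverC ?rpredM.
apply/polyP => i; rewrite coef_map /= !(coefD, coefMX, coefZ, coefC).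
case: i => [|i] /=.
  by rewrite !add0r ev !tofracM mulrACA (mulfV vF) mulr1 mulrC.
by rewrite !addr0 tofracM -coef_map hPD coefZ tofracM mulrA [v%:F * _]mulrC.
Qed.

Lemma bounded_simple_root (q : {poly L}) y : q \is a polyOver Fsub ->
  root q y%:F -> q^`().[y%:F] != 0 -> y \in bounded.
Proof.
move=> hq /eqP qy dqy.
have [D [P [_ nD hP hPD]]] := clear_denominators hq.
have DF : D%:F != 0 :> L by rewrite tofrac_eq0.
apply: (hensel_bounded hP).
  by apply/eqP; rewrite -tofrac_eq0 -horner_map hPD hornerZ qy mulr0.
rewrite -tofrac_eq0 -horner_map -deriv_map hPD derivZ hornerZ.
exact: mulf_neq0 DF dqy.
Qed.

(* Every Laurent series is t^-k y for some power series y, using that a power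
   series with nonzero constant term is invertible. *)
Lemma laurent_decomp x : exists k y, x = ((pX K ^+ k)%:F)^-1 * y%:F.
Proof.
have [u [v [nv ->]]] := frac_rep x.
have [k vk kmin] := ex_minnP (pser_neq0 nv).
have vlow : vanishes_below k v.
  by move=> n hn; apply/eqP/negPn/negP => /kmin; rewrite leqNgt hn.
set w := ptail k v; have ev : v = pX K ^+ k * w := vanishes_belowE vlow.
have w0 : w 0%N != 0 by rewrite pcoef_tail add0n.
have wF : w%:F != 0 :> L by rewrite tofrac_eq0; apply: contraNneq w0 => ->.
have winvF : (pser_inv w)%:F = (w%:F)^-1 :> L.
  apply: (mulIf wF); rewrite mulVf // -tofracM pser_invK // tofrac1.
exists k, (u * pser_inv w).
by rewrite ev !tofracM winvF invfM mulrCA.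
Qed.
End QuotientField.
Arguments Fsub {R}.

(* A separable element x = t^-k y of K((t)) over F: y is a simple root of
   p(t^-k X), which has coefficients in F, hence y is bounded and x lies in F. *)
Theorem proposition5p3 (R : idomainType) :
  separably_closed_in (@in_F R).
Proof.
move=> x [p [pF sep_p px]].
have pFsub : p \is a polyOver (@Fsub R).
  by apply/polyOverP => i; apply/in_F_Fsub.
have [k [y ex]] := laurent_decomp x.
set c := (pX {fraction R} ^+ k)%:F in ex.
have cF : c \in Fsub by apply: Fsub_tofrac; rewrite rpredX ?bounded_pX.
have c0 : c != 0 by rewrite tofrac_eq0 pXn_neq0.
have hy : y \in bounded.
  apply: (@bounded_simple_root _ (p \Po (c^-1 *: 'X))).
  - by rewrite polyOver_comp ?polyOverZ ?polyOverX ?rpredV.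
  - by rewrite /root horner_comp hornerZ hornerX -ex.
  - rewrite deriv_comp derivZ derivX hornerM horner_comp !hornerZ hornerX -ex.
    rewrite -polyC1 hornerC mulr1 mulf_neq0 ?invr_eq0 //.
    exact: separable_root_deriv.
apply/in_F_Fsub; rewrite ex; apply: rpredM; [by rewrite rpredV | exact: Fsub_tofrac].
Qed.
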